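(* Let $p\in(1,\infty)$ and let $s\ge 2$ be an integer. For an integer $b$ with $0\le b\le s$, let $f(b)=\min_{c\in\mathbb{R}}\big((s-b)|c|^p+b|1-c|^p\big)$, the contribution to the $\operatorname{dist}_p$-cost of a cluster of $s$ vectors with entries in $\{0,1\}$ from a coordinate in which exactly $b$ of the vectors have value $1$ and $s-b$ have value $0$. Then $f(b)/b$ is strictly decreasing in $b$ for $0<b<s$.
   Context: For $p>0$, $\operatorname{dist}_p(x,y)=\sum_{i=1}^d|x[i]-y[i]|^p$; the cost of a cluster $C$ is $\min_{c\in\mathbb{R}^d}\sum_{x\in C}\operatorname{dist}_p(x,c)$, which decomposes as a sum over coordinates of the optimal one-dimensional contributions. *)

From HB Require Import structures.
From mathcomp Require Import all_boot all_order all_algebra.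
From mathcomp Require Import all_classical all_reals all_analysis.
Set Implicit Arguments. Unset Strict Implicit. Unset Printing Implicit Defensive.
Import Order.TTheory GRing.Theory Num.Theory.
Local Open Scope classical_set_scope.
Local Open Scope ring_scope.

(* Cost of one coordinate with b ones and (s - b) zeros among s binary
   vectors, for dist_p:  min_{c in R} ((s-b)|c|^p + b|1-c|^p).
   The minimum is written as the infimum over c (it is attained). *)
Definition coord_cost (R : realType) (p : R) (s b : nat) : R :=
  inf [set ((s - b)%:R * (`|c| `^ p) + b%:R * (`|1 - c| `^ p)) | c in [set: R]].

From HB Require Import structures.
From mathcomp Require Import all_boot all_order all_algebra.
From mathcomp Require Import all_classical all_reals all_analysis.
From mathcomp Require Import ring lra.
Import Order.TTheory GRing.Theory Num.Theory.
Local Open Scope ring_scope.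

(** Dividing the coordinate cost by b gives the infimum over c of
    h_t(c) = t |c|^p + |1 - c|^p with t = s/b - 1, so it suffices to show that
    t |-> inf_c h_t(c) is strictly increasing on t > 0.  For t2 < t1 the two
    functions differ by (t1 - t2) |c|^p, which is bounded away from 0 unless c
    is near 0; and near c = 0 both are close to h(0) = 1, which lies strictly
    above inf h_t2 because p > 1 makes the slope of c |-> t c^p vanish at 0. *)

Lemma powR_ge_near1 (R : realType) (p a : R) : 0 < p -> 0 < a < 1 ->
  exists2 d : R, 0 < d & forall x, 1 - d <= x -> a <= x `^ p.
Proof.
move=> p_gt0 /andP[a_gt0 a_lt1].
have pV_gt0 : 0 < p^-1 by rewrite invr_gt0.
set q := a `^ p^-1.
have q_lt1 : q < 1.
  have := @gt0_ltr_powR R p^-1 pV_gt0 a 1.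
  by rewrite !nnegrE powR1 (ltW a_gt0) ler01; apply.
have q_ge0 : 0 <= q by apply: powR_ge0.
have qpE : q `^ p = a by rewrite -powRrM mulVf ?powRr1 ?(ltW a_gt0) ?gt_eqF.
exists (1 - q) => [|x x_ge]; first lra.
rewrite -qpE; apply: (ge0_ler_powR (ltW p_gt0)); rewrite ?nnegrE //; lra.
Qed.

Section CostRatio.
Variables (R : realType) (p : R).

Definition cost_ratio (t c : R) : R := t * `|c| `^ p + `|1 - c| `^ p.

Definition min_cost_ratio (t : R) : R := inf (range (cost_ratio t)).

Lemma cost_ratio_ge0 t c : 0 <= t -> 0 <= cost_ratio t c.
Proof. by move=> t_ge0; rewrite addr_ge0 ?mulr_ge0 ?powR_ge0. Qed.

Lemma min_cost_ratio_le t c : 0 <= t -> min_cost_ratio t <= cost_ratio t c.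
Proof.
move=> t_ge0; apply: ge_inf; last by exists c.
by exists 0 => _ [x _ <-]; apply: cost_ratio_ge0.
Qed.

Lemma le_min_cost_ratio t x :
  (forall c, x <= cost_ratio t c) -> x <= min_cost_ratio t.
Proof.
move=> x_lb; apply: lb_le_inf => [|_ [c _ <-] //].
by exists (cost_ratio t 0), 0.
Qed.

Lemma cost_ratio_lt1 t : 1 < p -> 0 < t -> exists c, cost_ratio t c < 1.
Proof.
move=> p_gt1 t_gt0.
have p_gt0 : 0 < p by lra.
set K := (2 * t)^-1.
have K_gt0 : 0 < K by rewrite invr_gt0; lra.
(* c^(p-1) <= 1/(2t) gives t c^p <= c/2, while (1 - c)^p <= 1 - c. *)
set c := Num.min (1 / 2) (K `^ (p - 1)^-1).
have c_gt0 : 0 < c by rewrite lt_min powR_gt0 // andbT; lra.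
have c_le_half : c <= 1 / 2 by rewrite ge_min lexx.
have cK : c `^ (p - 1) <= K.
  have p1_gt0 : 0 < p - 1 by lra.
  have c_le : c <= K `^ (p - 1)^-1 by rewrite ge_min lexx orbT.
  have := ge0_ler_powR (ltW p1_gt0) (ltW c_gt0) (powR_ge0 _ _) c_le.
  by rewrite -powRrM mulVf ?powRr1 ?(ltW K_gt0) ?gt_eqF.
have one_sub_c : (1 - c) `^ p <= 1 - c by apply: ge1r_powR; lra.
exists c; rewrite /cost_ratio !ger0_norm; try lra.
rewrite -(mulr_powRB1 (ltW c_gt0)) //.
have : t * (c * c `^ (p - 1)) <= t * (c * K) by rewrite !ler_pM2l.
have -> : t * (c * K) = c / 2 by rewrite /K; field; lra.
lra.
Qed.

Lemma min_cost_ratio_lt1 t : 1 < p -> 0 < t -> min_cost_ratio t < 1.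
Proof.
move=> p_gt1 t_gt0; have [c hc_lt1] := cost_ratio_lt1 t p_gt1 t_gt0.
exact: le_lt_trans (min_cost_ratio_le t c (ltW t_gt0)) hc_lt1.
Qed.

Lemma ltr_min_cost_ratio t1 t2 : 1 < p ->
  0 < t2 -> t2 < t1 -> min_cost_ratio t2 < min_cost_ratio t1.
Proof.
move=> p_gt1 t2_gt0 t21.
set m := min_cost_ratio t2.
have m_ge0 : 0 <= m.
  by apply: le_min_cost_ratio => c; apply: cost_ratio_ge0; lra.
have m_lt1 : m < 1 by apply: min_cost_ratio_lt1.
have [d d_gt0 near1] :
    exists2 d, 0 < d & forall x, 1 - d <= x -> (1 + m) / 2 <= x `^ p.
  by apply: powR_ge_near1; [lra | apply/andP; split; lra].
set e := Num.min ((t1 - t2) * d `^ p) ((1 - m) / 2).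
have e_gt0 : 0 < e by rewrite lt_min mulr_gt0 ?powR_gt0 //=; lra.
suff : m + e <= min_cost_ratio t1 by lra.
apply: le_min_cost_ratio => c.
have [d_le_c | c_lt_d] := leP d `|c|.
- have : (t1 - t2) * d `^ p <= (t1 - t2) * `|c| `^ p.
    rewrite ler_pM2l ?subr_gt0 //; apply: ge0_ler_powR;
      by rewrite ?nnegrE ?normr_ge0 //; lra.
  have : m <= cost_ratio t2 c by apply: min_cost_ratio_le; lra.
  have : e <= (t1 - t2) * d `^ p by rewrite ge_min lexx.
  rewrite /cost_ratio; lra.
- have : (1 + m) / 2 <= `|1 - c| `^ p.
    by apply: near1; have := lerB_dist 1 c; rewrite normr1; lra.
  have : 0 <= t1 * `|c| `^ p by rewrite mulr_ge0 ?powR_ge0 //; lra.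
  have : e <= (1 - m) / 2 by rewrite ge_min lexx orbT.
  rewrite /cost_ratio; lra.
Qed.

Lemma coord_cost_divn s b : (0 < b)%N -> (b <= s)%N ->
  coord_cost p s b / b%:R = min_cost_ratio (s%:R / b%:R - 1).
Proof.
move=> b_gt0 b_le_s.
have b_gt0' : (0 : R) < b%:R by rewrite ltr0n.
set t := s%:R / b%:R - 1.
have t_ge0 : 0 <= t by rewrite subr_ge0 ler_pdivlMr // mul1r ler_nat.
have termE c : (s - b)%:R * `|c| `^ p + b%:R * `|1 - c| `^ p
               = cost_ratio t c * b%:R.
  by rewrite natrB // /cost_ratio /t; field; rewrite gt_eqF.
apply/eqP; rewrite eq_le; apply/andP; split.
  apply: le_min_cost_ratio => c; rewrite ler_pdivrMr // -termE.
  apply: ge_inf; last by exists c.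
  by exists 0 => _ [x _ <-]; rewrite termE mulr_ge0 ?cost_ratio_ge0 ?ler0n.
rewrite ler_pdivlMr //; apply: lb_le_inf => [|_ [c _ <-]].
  by exists ((s - b)%:R * `|0 : R| `^ p + b%:R * `|1 - 0 : R| `^ p), 0.
by rewrite termE ler_pM2r // min_cost_ratio_le.
Qed.

End CostRatio.

Theorem claim12 (R : realType) (p : R) (s : nat) :
  1 < p -> (2 <= s)%N ->
  forall b1 b2 : nat, (0 < b1)%N -> (b1 < b2)%N -> (b2 < s)%N ->
    coord_cost p s b2 / b2%:R < coord_cost p s b1 / b1%:R.
Proof.
move=> p_gt1 _ b1 b2 b1_gt0 b12 b2s.
have b2_gt0 : (0 < b2)%N := ltn_trans b1_gt0 b12.
have b1_gt0' : (0 : R) < b1%:R by rewrite ltr0n.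
have b2_gt0' : (0 : R) < b2%:R by rewrite ltr0n.
have s_gt0 : (0 : R) < s%:R by rewrite ltr0n (ltn_trans b2_gt0).
rewrite !coord_cost_divn ?(ltnW b2s) ?(ltnW (ltn_trans b12 b2s)) //.
apply: ltr_min_cost_ratio => //.
  by rewrite subr_gt0 ltr_pdivlMr // mul1r ltr_nat.
by rewrite ltrD2r ltr_pM2l // ltf_pV2 ?ltr_nat.
Qed.
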